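(* Let $A = A_1 \oplus A_2 \in \mathbb{R}^{n\times n}$ be a block-diagonal direct sum, where $A_1$ and $A_2$ are irreducible nonnegative square matrices. For $t\in[0,1]$ let $r(t) := r\big((1-t)A + tA^{\top}\big)$, and for $k=1,2$ let $r_k(t) := r\big((1-t)A_k + tA_k^{\top}\big)$, where $r(\cdot)$ denotes spectral radius. Suppose there exists $t^*\in(0,1)$ such that (1) $r_1(t^* ) = r_2(t^* )$, and (2) $r_1'(t^* ) \neq r_2'(t^* )$. Then $r(t)$ is not concave in $t\in(0,1)$.
   Context: $r(M)$ denotes the spectral radius of a square matrix $M$. The direct sum $A_1\oplus A_2$ is the block-diagonal matrix with diagonal blocks $A_1, A_2$. *)

From HB Require Import structures.
From mathcomp Require Import all_boot all_order all_algebra.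
From mathcomp Require Import all_classical all_reals all_analysis.
From mathcomp Require Import complex.
Set Implicit Arguments. Unset Strict Implicit. Unset Printing Implicit Defensive.
Import Order.TTheory GRing.Theory Num.Theory.
Local Open Scope ring_scope.
Local Open Scope classical_set_scope.

Definition spectral_radius (R : realType) (n : nat) (M : 'M[R]_n) : R :=
  sup [set Normc.normc z | z in
        [set z : R[i] | root (map_poly (real_complex R) (char_poly M)) z]].

Definition nonneg_mx (R : realType) (n : nat) (A : 'M[R]_n) : Prop :=
  forall i j, 0 <= A i j.

(* Irreducible (nonnegative) matrix: for every pair of indices i, j there is
   a power k with (A^k)_{ij} > 0 (equivalently, the digraph of A is strongly
   connected; a 1x1 matrix is irreducible, via k = 0). *)
Definition irreducible_mx (R : realType) (n : nat) (A : 'M[R]_n) : Prop :=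
  forall i j : 'I_n, exists k : nat, 0 < (A ^+ k) i j.

Definition symm_path (R : realType) (n : nat) (A : 'M[R]_n) (t : R) : 'M[R]_n :=
  (1 - t) *: A + t *: A^T.

Definition concave_on_01 (R : realType) (f : R -> R) : Prop :=
  forall x y a : R, 0 < x < 1 -> 0 < y < 1 -> 0 <= a <= 1 ->
    (1 - a) * f x + a * f y <= f ((1 - a) * x + a * y).

From HB Require Import structures.
From mathcomp Require Import all_boot all_order all_algebra.
From mathcomp Require Import all_classical all_reals all_analysis.
From mathcomp Require Import complex.
From mathcomp Require Import ring lra.
Set Implicit Arguments. Unset Strict Implicit. Unset Printing Implicit Defensive.
Import Order.TTheory GRing.Theory Num.Theory.
Import numFieldNormedType.Exports.
Local Open Scope ring_scope.
Local Open Scope classical_set_scope.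

(* The characteristic polynomial of a block-diagonal matrix is the product of
   those of its blocks, so r(A1 (+) A2) = max (r(A1), r(A2)); as the symmetrizing
   path respects the block structure, r = max (r1, r2) on [0, 1].  At t* the two
   branches cross with different slopes, so r has a convex kink there, whereas
   for a concave function the right difference quotients at t* never exceed the
   left ones. *)

Section SpectralRadius.
Variable R : realType.

Definition eigen_moduli n (M : 'M[R]_n) : set R :=
  [set Normc.normc z | z in
        [set z : R[i] | root (map_poly (real_complex R) (char_poly M)) z]].

Lemma normc_ge0 (z : R[i]) : 0 <= Normc.normc z.
Proof. by case: z => a b; exact: sqrtr_ge0. Qed.

Lemma has_ubound_eigen_moduli n (M : 'M[R]_n) : has_ubound (eigen_moduli M).
Proof.
set p := map_poly (real_complex R) (char_poly M).
have [rs p_split] := closed_field_poly_normal p.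
have p_neq0 : lead_coef p != 0.
  by rewrite lead_coef_eq0 map_poly_eq0 monic_neq0 // char_poly_monic.
exists (\sum_(w <- rs) Normc.normc w) => _ [z /= pz <-].
have zrs : z \in rs by move: pz; rewrite -/p p_split rootZ // root_prod_XsubC.
rewrite (big_rem _ zrs) /= lerDl sumr_ge0 // => w _; exact: normc_ge0.
Qed.

Lemma eigen_moduli_le_spectral_radius n (M : 'M[R]_n) x :
  eigen_moduli M x -> x <= spectral_radius M.
Proof. exact: (ub_le_sup (has_ubound_eigen_moduli M)). Qed.

Lemma spectral_radius_le n (M : 'M[R]_n) b :
  0 <= b -> (forall x, eigen_moduli M x -> x <= b) -> spectral_radius M <= b.
Proof.
move=> b0 Mb; have [M0|/set0P ne] := eqVneq (eigen_moduli M) set0.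
  by rewrite /spectral_radius -/(eigen_moduli M) M0 sup0.
exact: ge_sup.
Qed.

Lemma spectral_radius_ge0 n (M : 'M[R]_n) : 0 <= spectral_radius M.
Proof.
have [M0|/set0P [x Mx]] := eqVneq (eigen_moduli M) set0.
  by rewrite /spectral_radius -/(eigen_moduli M) M0 sup0.
apply: le_trans (eigen_moduli_le_spectral_radius Mx).
by case: Mx => z _ <-; exact: normc_ge0.
Qed.

Lemma eigen_moduli_block_diag n1 n2 (B1 : 'M[R]_n1) (B2 : 'M[R]_n2) :
  eigen_moduli (block_mx B1 0 0 B2) = eigen_moduli B1 `|` eigen_moduli B2.
Proof.
rewrite /eigen_moduli /char_poly char_block_diag_mx det_ublock rmorphM /=.
rewrite -image_setU; congr (_ @` _).
by apply/seteqP; split => z /=; rewrite rootM => /orP.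
Qed.

Lemma spectral_radius_block_diag n1 n2 (B1 : 'M[R]_n1) (B2 : 'M[R]_n2) :
  spectral_radius (block_mx B1 0 0 B2) =
    Num.max (spectral_radius B1) (spectral_radius B2).
Proof.
have sub1 x : eigen_moduli B1 x -> eigen_moduli (block_mx B1 0 0 B2) x.
  by rewrite eigen_moduli_block_diag; left.
have sub2 x : eigen_moduli B2 x -> eigen_moduli (block_mx B1 0 0 B2) x.
  by rewrite eigen_moduli_block_diag; right.
apply: le_anti; rewrite ge_max; apply/and3P; split.
- apply: spectral_radius_le => [|x]; first by rewrite le_max spectral_radius_ge0.
  rewrite eigen_moduli_block_diag => -[] /eigen_moduli_le_spectral_radius x_le;
    by rewrite le_max x_le ?orbT.
- apply: spectral_radius_le (spectral_radius_ge0 _) _ => x /sub1.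
  exact: eigen_moduli_le_spectral_radius.
- apply: spectral_radius_le (spectral_radius_ge0 _) _ => x /sub2.
  exact: eigen_moduli_le_spectral_radius.
Qed.

Lemma symm_path_block_diag n1 n2 (B1 : 'M[R]_n1) (B2 : 'M[R]_n2) t :
  symm_path (block_mx B1 0 0 B2) t =
    block_mx (symm_path B1 t) 0 0 (symm_path B2 t).
Proof.
by rewrite /symm_path tr_block_mx !trmx0 !scale_block_mx !scaler0 add_block_mx !addr0.
Qed.

End SpectralRadius.

Section ConcaveKink.
Variable R : realType.
Implicit Types (f g : R -> R) (t h : R).

Lemma derive1_cvg g t : derivable g t 1 ->
  (fun h => h^-1 * (g (h + t) - g t)) @ 0^' --> derive1 g t.
Proof.
move=> dg; rewrite derive1E.
by under eq_fun => h do rewrite -[h in h + t]mulr1; exact: dg.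
Qed.

Lemma le_derive1_of_increments g1 g2 t :
  derivable g1 t 1 -> derivable g2 t 1 ->
  (\forall h \near 0^'+, g2 (h + t) - g2 t <= g1 t - g1 (t - h)) ->
  derive1 g2 t <= derive1 g1 t.
Proof.
move=> dg1 dg2 incr.
have cvg2 : (fun h => h^-1 * (g2 (h + t) - g2 t)) @ 0^'+ --> derive1 g2 t.
  exact: cvg_dnbhs_at_right (derive1_cvg dg2).
have cvg1 : (fun h => h^-1 * (g1 t - g1 (t - h))) @ 0^'+ --> derive1 g1 t.
  have -> : (fun h => h^-1 * (g1 t - g1 (t - h))) =
            (fun h => h^-1 * (g1 (h + t) - g1 t)) \o -%R.
    by apply/funext => h /=; rewrite invrN mulNr -mulrN opprB (addrC (- h)).
  by have /cvg_at_leftNP := cvg_dnbhs_at_left (derive1_cvg dg1); rewrite oppr0.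
apply: ler_cvg_to cvg2 cvg1 _; near=> h.
have h0 : 0 < h by near: h; exact: nbhs_right_gt.
by rewrite ler_pM2l ?invr_gt0 //; near: h.
Unshelve. all: by end_near. Qed.

Lemma concave_on_01_midpoint f t h : concave_on_01 f ->
  0 <= h -> 0 < t - h -> t + h < 1 -> f (t + h) - f t <= f t - f (t - h).
Proof.
move=> conc h0 th0 th1.
have := conc (t - h) (t + h) 2^-1.
have -> : (1 - 2^-1) * (t - h) + 2^-1 * (t + h) = t by field.
have half : 0 <= (2^-1 : R) <= 1 by apply/andP; split; lra.
have lo : 0 < t - h < 1 by apply/andP; split; lra.
have hi : 0 < t + h < 1 by apply/andP; split; lra.
by move=> /(_ lo hi half); lra.
Qed.

Lemma le_derive1_of_concave_majorant f g1 g2 t : 0 < t < 1 -> concave_on_01 f ->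
  (forall s, g1 s <= f s) -> (forall s, g2 s <= f s) ->
  g1 t = f t -> g2 t = f t -> derivable g1 t 1 -> derivable g2 t 1 ->
  derive1 g2 t <= derive1 g1 t.
Proof.
move=> /andP[t0 t1] conc fg1 fg2 g1t g2t dg1 dg2.
apply: le_derive1_of_increments => //; near=> h.
have h0 : 0 < h by near: h; exact: nbhs_right_gt.
have ht : h < t by near: h; exact: nbhs_right_lt.
have h1t : h < 1 - t by near: h; apply: nbhs_right_lt; rewrite subr_gt0.
have th0 : 0 < t - h by lra.
have th1 : t + h < 1 by lra.
have := concave_on_01_midpoint conc (ltW h0) th0 th1.
by have := fg1 (t - h); have := fg2 (t + h); rewrite (addrC h t) g1t g2t; lra.
Unshelve. all: by end_near. Qed.

Lemma not_concave_on_01_max g1 g2 t : 0 < t < 1 ->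
  g1 t = g2 t -> derivable g1 t 1 -> derivable g2 t 1 ->
  derive1 g1 t != derive1 g2 t ->
  ~ concave_on_01 (fun s => Num.max (g1 s) (g2 s)).
Proof.
move=> t01 g12 dg1 dg2 /negP neq conc; apply: neq.
have le1 s : g1 s <= Num.max (g1 s) (g2 s) by rewrite le_max lexx.
have le2 s : g2 s <= Num.max (g1 s) (g2 s) by rewrite le_max lexx orbT.
have eq1 : g1 t = Num.max (g1 t) (g2 t) by rewrite g12 maxxx.
have eq2 : g2 t = Num.max (g1 t) (g2 t) by rewrite g12 maxxx.
by rewrite eq_le !(le_derive1_of_concave_majorant t01 conc).
Qed.

End ConcaveKink.

Theorem proposition1 (R : realType) (n1 n2 : nat)
    (A1 : 'M[R]_n1) (A2 : 'M[R]_n2) (tstar : R) :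
  (0 < n1)%N -> (0 < n2)%N ->
  nonneg_mx A1 -> irreducible_mx A1 ->
  nonneg_mx A2 -> irreducible_mx A2 ->
  0 < tstar < 1 ->
  let A := block_mx A1 0 0 A2 in
  let r := fun t => spectral_radius (symm_path A t) in
  let r1 := fun t => spectral_radius (symm_path A1 t) in
  let r2 := fun t => spectral_radius (symm_path A2 t) in
  r1 tstar = r2 tstar ->
  derivable r1 tstar 1 -> derivable r2 tstar 1 ->
  derive1 r1 tstar != derive1 r2 tstar ->
  ~ concave_on_01 r.
Proof.
move=> _ _ _ _ _ _ tstar01 A r r1 r2 r12 dr1 dr2 dr12.
have -> : r = fun t => Num.max (r1 t) (r2 t).
  by apply/funext => t; rewrite /r /A symm_path_block_diag spectral_radius_block_diag.
exact: not_concave_on_01_max tstar01 r12 dr1 dr2 dr12.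
Qed.
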